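(* Let $n \geq 1$ and $d \geq 0$ be integers. If $F$ is a graph with maximum degree at most $d$ on at least $dn + 2^n$ vertices, then the complement of $F$ contains a copy of $Q_n$. As a consequence, $r(Q_n, K_3) \leq 2^n(n+1)$ for every $n \geq 1$.
   Context: The hypercube $Q_n$ is the graph on vertex set $\{0,1\}^n$ in which two vertices are adjacent if and only if they differ in exactly one coordinate. For graphs $G,H$, $r(G,H)$ is the smallest $N$ such that every red/blue edge-coloring of $K_N$ contains a red copy of $G$ or a blue copy of $H$. *)

From mathcomp Require Import all_boot.
Set Implicit Arguments. Unset Strict Implicit. Unset Printing Implicit Defensive.

Definition simple_graph (T : finType) (E : rel T) : Prop :=
  symmetric E /\ irreflexive E.

Definition max_degree_le (T : finType) (E : rel T) (d : nat) : Prop :=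
  forall x : T, #|[set y | E x y]| <= d.

Definition complement (T : finType) (E : rel T) : rel T :=
  fun x y => (x != y) && ~~ E x y.

Definition contains_copy (U V : finType) (G : rel U) (H : rel V) : Prop :=
  exists f : U -> V, injective f /\ (forall x y, G x y -> H (f x) (f y)).

Definition cube_vertex (n : nat) := {ffun 'I_n -> bool}.
Definition hypercube (n : nat) : rel (cube_vertex n) :=
  fun u v => #|[set i | u i != v i]| == 1.

Definition complete_graph (m : nat) : rel 'I_m := fun x y => x != y.

(* Ramsey arrow: every red/blue colouring of the edges of K_N
   (c x y = true means the edge xy is red; c is symmetric) contains
   a red copy of G or a blue copy of H.  r(G,H) <= N iff this holds. *)
Definition red_graph (N : nat) (c : rel 'I_N) : rel 'I_N :=
  fun x y => (x != y) && c x y.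
Definition blue_graph (N : nat) (c : rel 'I_N) : rel 'I_N :=
  fun x y => (x != y) && ~~ c x y.
Definition ramsey_arrow (N : nat) (U V : finType) (G : rel U) (H : rel V) : Prop :=
  forall c : rel 'I_N, symmetric c ->
    contains_copy G (red_graph c) \/ contains_copy H (blue_graph c).
Arguments hypercube n : clear implicits.
Arguments complete_graph m : clear implicits.
Arguments ramsey_arrow N [U V] G H.

From mathcomp Require Import all_boot.
From mathcomp Require Import zify.

Set Implicit Arguments.
Unset Strict Implicit.
Unset Printing Implicit Defensive.

(* Both statements rest on one greedy embedding argument.  If G has maximum
   degree at most D and F has maximum degree at most d, then G embeds into
   the complement of F as soon as #|V(G)| + D * d <= #|V(F)|: embed the
   vertices of G one at a time; the new vertex x must avoid the images of the
   vertices already embedded and the F-neighbours of the images of its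
   already embedded G-neighbours, which together are fewer than #|V(F)|.
   Since Q_n is n-regular on 2^n vertices this gives the first statement.
   For the Ramsey bound, colour K_N with N = 2^n (n+1).  If some vertex has
   at least 2^n blue neighbours, either two of them span a blue edge (a blue
   triangle) or they form a red clique large enough to contain Q_n.
   Otherwise the blue graph has maximum degree at most 2^n - 1 and the first
   statement places Q_n in its complement, which is the red graph. *)

Lemma card_bigcup_le (I T : finType) (P : pred I) (A : I -> {set T}) :
  #|\bigcup_(i | P i) A i| <= \sum_(i | P i) #|A i|.
Proof.
apply: (big_rec2 (fun (B : {set T}) s => #|B| <= s)); first by rewrite cards0.
by move=> i B s _ leBs; rewrite cardsU; lia.
Qed.

Lemma contains_copy_sub (U V : finType) (G : rel U) (H H' : rel V) :
  subrel H H' -> contains_copy G H -> contains_copy G H'.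
Proof. by move=> HH' [f [finj fedge]]; exists f; split=> // x y /fedge /HH'. Qed.

Section GreedyEmbedding.

Variables (U T : finType) (G : rel U) (F : rel T) (D d : nat).
Hypotheses (Gsym : symmetric G) (Girr : irreflexive G) (Fsym : symmetric F).
Hypotheses (Gdeg : max_degree_le G D) (Fdeg : max_degree_le F d).

Definition embeds_on (S : {set U}) (f : U -> T) : Prop :=
  {in S &, injective f} /\
  {in S &, forall x y, G x y -> complement F (f x) (f y)}.

Definition forbidden (S : {set U}) (f : U -> T) (x : U) : {set T} :=
  f @: S :|: \bigcup_(y in S | G x y) [set w | F (f y) w].

(* Only #|S| images and at most D * d F-neighbours of G-neighbours are excluded. *)
Lemma card_forbidden S f x : #|forbidden S f x| <= #|S| + D * d.
Proof.
rewrite /forbidden; apply: leq_trans (leq_card_setU _ _).1 _.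
apply: leq_add; first exact: leq_imset_card.
apply: leq_trans (card_bigcup_le _ _) _.
have deg_sum : \sum_(y in S | G x y) #|[set w | F (f y) w]| <=
               \sum_(y in S | G x y) d by apply: leq_sum => y _; apply: Fdeg.
apply: leq_trans deg_sum _.
rewrite sum_nat_const; apply: leq_mul => //.
apply: leq_trans (Gdeg x); apply: subset_leq_card.
by apply/subsetP => y; rewrite !inE => /andP[].
Qed.

Lemma embeds_on_extend S f x v :
  embeds_on S f -> x \notin S -> v \notin forbidden S f x ->
  embeds_on (x |: S) (fun z => if z == x then v else f z).
Proof.
move=> [finj fedge] xS; rewrite /forbidden in_setU negb_or.
move=> /andP[v_notin_image v_not_adj].
have fy_neq_v y : y \in S -> f y != v.
  by move=> yS; apply: contraNneq v_notin_image => <-; rewrite imset_f.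
have not_F_fy_v y : y \in S -> G x y -> ~~ F (f y) v.
  move=> yS Gxy; apply: contraNN v_not_adj => Fyv.
  by apply/bigcupP; exists y; rewrite ?inE ?yS ?Gxy.
have neq_x y : y \in S -> (y == x) = false.
  by move=> yS; apply: contraNF xS => /eqP <-.
split=> a b /setU1P[->|aS] /setU1P[->|bS]; rewrite ?eqxx ?neq_x //=.
- by move=> /eqP; rewrite eq_sym (negbTE (fy_neq_v b bS)).
- by move=> /eqP; rewrite (negbTE (fy_neq_v a aS)).
- exact: finj.
- by rewrite Girr.
- move=> Gxb; rewrite /complement eq_sym fy_neq_v // Fsym.
  exact: not_F_fy_v.
- move=> Gax; rewrite /complement fy_neq_v //=.
  by apply: not_F_fy_v; rewrite // Gsym.
- exact: fedge.
Qed.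

Hypothesis room : #|U| + D * d <= #|T|.

Lemma embeds_on_list (t0 : T) (s : seq U) : exists f, embeds_on [set:: s] f.
Proof.
elim: s => [|x s [f emb_f]].
  by exists (fun=> t0); split=> a; rewrite inE.
rewrite set_cons; have [xs|xs] := boolP (x \in [set:: s]).
  by exists f; rewrite (setUidPr _) // sub1set.
have s_small : #|[set:: s]| < #|U|.
  rewrite -(cardsC [set:: s]) -addn1 leq_add2l.
  by apply/card_gt0P; exists x; rewrite inE.
have /card_gt0P [v] : 0 < #|~: forbidden [set:: s] f x|.
  have := card_forbidden [set:: s] f x; have := cardsC (forbidden [set:: s] f x).
  lia.
rewrite inE => v_allowed.
by exists (fun z => if z == x then v else f z); apply: embeds_on_extend.
Qed.

Lemma greedy_embedding : contains_copy G (complement F).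
Proof.
case: (pickP (@predT U)) => [u0 _ | U_empty]; last first.
  (* with no vertices to embed, any function is a copy *)
  exists (fun u => False_rect T (Bool.diff_true_false (U_empty u))).
  by split=> u; have := U_empty u.
have [t0 _] : exists t0 : T, true.
  apply/card_gt0P; apply: leq_trans room; apply: ltn_addr.
  by apply/card_gt0P; exists u0.
have [f [finj fedge]] := embeds_on_list t0 (enum U).
have in_enum u : u \in [set:: enum U] by rewrite inE mem_enum.
by exists f; split=> [a b|a b]; [apply: finj | apply: fedge].
Qed.

End GreedyEmbedding.

Lemma hypercube_sym n : symmetric (hypercube n).
Proof.
move=> u v; rewrite /hypercube.
by rewrite (_ : [set i | u i != v i] = [set i | v i != u i]) //;
  apply/setP => i; rewrite !inE eq_sym.
Qed.

Lemma hypercube_irr n : irreflexive (hypercube n).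
Proof.
move=> u; rewrite /hypercube.
by rewrite (_ : [set i | u i != u i] = set0) ?cards0 //; apply/setP => i; rewrite !inE eqxx.
Qed.

Lemma card_cube_vertex n : #|cube_vertex n| = 2 ^ n.
Proof. by rewrite card_ffun card_bool card_ord. Qed.

(* Q_n has maximum degree n: every neighbour of u is u with one bit flipped. *)
Lemma hypercube_max_degree n : max_degree_le (hypercube n) n.
Proof.
move=> u.
pose flip i : cube_vertex n := [ffun j => if j == i then ~~ u j else u j].
have nbrs_flips : [set v | hypercube n u v] \subset flip @: [set: 'I_n].
  apply/subsetP => v; rewrite inE /hypercube => /cards1P [i diff_i].
  suff -> : v = flip i by rewrite imset_f.
  apply/ffunP => j; rewrite ffunE.
  have := congr1 (fun A : {set 'I_n} => j \in A) diff_i; rewrite !inE /=.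
  case: (eqVneq j i) => [->|_]; first by case: (u i); case: (v i).
  by move/negbFE/eqP.
apply: leq_trans (subset_leq_card nbrs_flips) _.
by apply: leq_trans (leq_imset_card _ _) _; rewrite cardsT card_ord.
Qed.

Lemma hypercube_in_complement (n d : nat) (T : finType) (F : rel T) :
  simple_graph F -> max_degree_le F d -> d * n + 2 ^ n <= #|T| ->
  contains_copy (hypercube n) (complement F).
Proof.
move=> [Fsym _] Fdeg room.
apply: (greedy_embedding (@hypercube_sym n) (@hypercube_irr n) Fsym
          (@hypercube_max_degree n) Fdeg).
by rewrite card_cube_vertex mulnC addnC.
Qed.

Lemma copy_in_clique (U V : finType) (G : rel U) (H : rel V) (A : {set V}) :
  irreflexive G -> #|U| <= #|A| -> {in A &, forall x y, x != y -> H x y} ->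
  contains_copy G H.
Proof.
move=> Girr UA A_clique.
have f_inj : injective (fun u => enum_val (widen_ord UA (enum_rank u))).
  move=> a b /enum_val_inj /(congr1 val) /= e.
  by apply: enum_rank_inj; apply: val_inj.
exists (fun u => enum_val (widen_ord UA (enum_rank u))); split=> // a b Gab.
apply: A_clique; try exact: enum_valP.
by apply: contraTneq Gab => /f_inj ->; rewrite Girr.
Qed.

Lemma triangle_copy (V : finType) (H : rel V) (x y z : V) :
  symmetric H -> irreflexive H -> H x y -> H y z -> H x z ->
  contains_copy (complete_graph 3) H.
Proof.
move=> Hsym Hirr Hxy Hyz Hxz.
have neq a b : H a b -> a != b by apply: contraTneq => ->; rewrite Hirr.
have xy := neq _ _ Hxy; have yz := neq _ _ Hyz; have xz := neq _ _ Hxz.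
exists (fun i : 'I_3 => nth x [:: x; y; z] i); split.
  move=> [[|[|[|i]]] hi] [[|[|[|j]]] hj] //= e; apply: val_inj => //=;
    by move: xy yz xz; rewrite e ?eqxx // => _ _ /negP.
by move=> [[|[|[|i]]] hi] [[|[|[|j]]] hj] //= _; rewrite // Hsym.
Qed.

Section Colouring.

Variables (N : nat) (c : rel 'I_N).
Hypothesis csym : symmetric c.

Lemma blue_graph_sym : symmetric (blue_graph c).
Proof. by move=> x y; rewrite /blue_graph eq_sym csym. Qed.

Lemma blue_graph_irr : irreflexive (blue_graph c).
Proof. by move=> x; rewrite /blue_graph eqxx. Qed.

Lemma complement_blue_sub_red : subrel (complement (blue_graph c)) (red_graph c).
Proof.
move=> x y; rewrite /complement /blue_graph /red_graph => /andP[-> ].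
by rewrite negb_and negbK => /orP[/negP|].
Qed.

(* A vertex with at least #|U| blue neighbours gives a blue triangle, or else
   its blue neighbourhood is a red clique containing any loopless G on U. *)
Lemma large_blue_neighbourhood (U : finType) (G : rel U) (v : 'I_N) :
  irreflexive G -> #|U| <= #|[set y | blue_graph c v y]| ->
  contains_copy G (red_graph c) \/ contains_copy (complete_graph 3) (blue_graph c).
Proof.
set A := [set y | blue_graph c v y] => Girr big_nbhd.
case: (boolP [exists y in A, exists z in A, blue_graph c y z]) =>
  [/exists_inP [y yA /exists_inP [z zA blue_yz]] | no_blue].
  right; rewrite !inE in yA zA.
  exact: (triangle_copy blue_graph_sym blue_graph_irr yA blue_yz zA).
left; apply: (copy_in_clique Girr big_nbhd) => x y xA yA xy.
move: no_blue; rewrite negb_exists_in.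
move=> /forall_inP /(_ x xA); rewrite negb_exists_in => /forall_inP /(_ y yA).
by rewrite /blue_graph /red_graph xy /= negbK.
Qed.

End Colouring.

Lemma hypercube_triangle_ramsey n :
  ramsey_arrow (2 ^ n * (n + 1)) (hypercube n) (complete_graph 3).
Proof.
move=> c csym.
case: (boolP [exists v, 2 ^ n <= #|[set y | blue_graph c v y]|]) =>
  [/existsP [v big_nbhd] | small_nbhds].
  apply: (large_blue_neighbourhood csym (@hypercube_irr n) (v := v)).
  by rewrite card_cube_vertex.
left; apply: (contains_copy_sub (@complement_blue_sub_red _ c)).
have blue_simple : simple_graph (blue_graph c).
  by split; [apply: blue_graph_sym | apply: blue_graph_irr].
apply: (hypercube_in_complement blue_simple (d := 2 ^ n - 1)).
  move=> x; move: small_nbhds; rewrite negb_exists => /forallP /(_ x).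
  by rewrite -ltnNge; have := expn_gt0 2 n; lia.
by rewrite card_ord; have := expn_gt0 2 n; nia.
Qed.

Theorem mainTheorem5 :
  (forall (n d : nat) (T : finType) (F : rel T),
      1 <= n -> simple_graph F -> max_degree_le F d ->
      d * n + 2 ^ n <= #|T| ->
      contains_copy (hypercube n) (complement F))
  /\
  (forall n : nat, 1 <= n ->
      ramsey_arrow (2 ^ n * (n + 1)) (hypercube n) (complete_graph 3)).
Proof.
split=> [n d T F _ | n _]; first exact: hypercube_in_complement.
exact: hypercube_triangle_ramsey.
Qed.
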